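(* Let $D\mathcal{M}$ be an $\ell c$DCB system, linearly conjugate via the positive diagonal matrix $Q=\mathrm{diag}(q_1,\dots,q_n)$ to the DCB system $D\tilde{\mathcal{M}}$ with reactions $y_{\cdot i}\to\tilde y'_{\cdot i}$, rate constants $\tilde\kappa_i$ and delays $\tau_i$, $i=1,\dots,\tilde r$, and stoichiometric subspace $\tilde{\mathscr S}$. For $a\in\mathbb{R}^n$ define $h_a: C([-\tau,0];\mathbb{R}^n_{\ge0})\to\mathbb{R}$ by $$h_a(\psi)=a^\top\Big[\psi(0)+\sum_{i=1}^{\tilde r}\Big(\tilde\kappa_i\prod_{j=1}^n q_j^{-y_{ji}}\int_{-\tau_i}^0\psi(s)^{y_{\cdot i}}\,ds\Big)Q\,y_{\cdot i}\Big],$$ and for $\theta\in C([-\tau,0];\mathbb{R}^n_{\ge0})$ let $$\mathcal H_\theta=\{\psi\in C([-\tau,0];\mathbb{R}^n_{\ge0}) : h_a(\psi)=h_a(\theta)\text{ for all }a\in (Q^{-1})^\top\tilde{\mathscr S}^\perp\}.$$ Then for every solution $x$ of $D\mathcal{M}$ with initial function $\theta$, $x_t\in\mathcal H_\theta$ for all $t\ge0$.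
   Context: For $x,y\in\mathbb{R}^n$ with $x\ge 0$, write $x^{y}=\prod_{j=1}^n x_j^{y_j}$. A delayed mass-action system on species $X_1,\dots,X_n$ consists of reactions $R_i: y_{\cdot i}\to y'_{\cdot i}$, $i=1,\dots,r$, with complexes $y_{\cdot i},y'_{\cdot i}\in\mathbb{R}^n_{\ge0}$, rate constants $\kappa_i>0$ and delays $\tau_i\ge0$; with $\tau\ge\max_i\tau_i$, its dynamics is the delay differential equation $\dot x(t)=F(x_t):=\sum_{i=1}^r\kappa_i\big[x(t-\tau_i)^{y_{\cdot i}}y'_{\cdot i}-x(t)^{y_{\cdot i}}y_{\cdot i}\big]$, $t\ge 0$, where $x_t(s)=x(t+s)$, $s\in[-\tau,0]$, with initial function $\theta\in C([-\tau,0];\mathbb{R}^n_{\ge0})$. Its stoichiometric subspace is $\mathscr S=\mathrm{span}\{y'_{\cdot i}-y_{\cdot i}\}$, and $\mathscr S^\perp$ its orthogonal complement. A vector $\bar x\in\mathbb{R}^n_{>0}$ is a complex balanced equilibrium if for every complex $\eta$ of the network $\sum_{i: y_{\cdot i}=\eta}\kappa_i\bar x^{y_{\cdot i}}=\sum_{i: y'_{\cdot i}=\eta}\kappa_i\bar x^{y_{\cdot i}}$. A delayed complex balanced (DCB) system is a delayed mass-action system admitting a positive complex balanced equilibrium. Two delayed mass-action systems $D\mathcal{M}$ (right-hand side $F$) and $D\tilde{\mathcal{M}}$ (right-hand side $\tilde F$) on the same species are linearly conjugate via a positive diagonal matrix $Q$ if $F(Q\psi)=Q\tilde F(\psi)$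 for all $\psi\in C([-\tau,0];\mathbb{R}^n_{>0})$, i.e. $x(t)=Q\tilde x(t)$ maps solutions of $D\tilde{\mathcal{M}}$ to solutions of $D\mathcal{M}$. An $\ell c$DCB system is a delayed mass-action system that is linearly conjugate via some positive diagonal matrix to a DCB system. *)

From Stdlib Require Import Reals.
From Coquelicot Require Import Coquelicot.
Open Scope R_scope.

(* Vectors in R^n are functions nat -> R, only indices j < n matter. *)

Fixpoint fsum (k : nat) (f : nat -> R) : R :=
  match k with O => 0 | S m => fsum m f + f m end.
Fixpoint fprod (k : nat) (f : nat -> R) : R :=
  match k with O => 1 | S m => fprod m f * f m end.

(* real power x^y for x >= 0, with the convention 0^0 = 1 and 0^y = 0 for y <> 0 *)
Definition rpow (x y : R) : R :=
  if Req_EM_T x 0 then (if Req_EM_T y 0 then 1 else 0) else Rpower x y.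

Definition mpow (n : nat) (x y : nat -> R) : R := fprod n (fun j => rpow (x j) (y j)).

Record DMAS := mkDMAS {
  nreac : nat;
  reac : nat -> nat -> R;
  prod : nat -> nat -> R;
  rate : nat -> R;
  delay : nat -> R }.

Definition valid_DMAS (n : nat) (M : DMAS) : Prop :=
  forall i, (i < nreac M)%nat ->
    0 < rate M i /\ 0 <= delay M i /\
    (forall j, (j < n)%nat -> 0 <= reac M i j /\ 0 <= prod M i j).

Definition delay_bound (M : DMAS) (tau : R) : Prop :=
  forall i, (i < nreac M)%nat -> delay M i <= tau.

Definition Frhs (n : nat) (M : DMAS) (psi : R -> nat -> R) (j : nat) : R :=
  fsum (nreac M) (fun i =>
    rate M i * (mpow n (psi (- delay M i)) (reac M i) * prod M i j
                - mpow n (psi 0) (reac M i) * reac M i j)).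

Definition veq (n : nat) (u v : nat -> R) : Prop := forall j, (j < n)%nat -> u j = v j.
Fixpoint veqb (n : nat) (u v : nat -> R) : bool :=
  match n with
  | O => true
  | S m => andb (veqb m u v) (if Req_EM_T (u m) (v m) then true else false)
  end.

Definition is_complex (n : nat) (M : DMAS) (eta : nat -> R) : Prop :=
  exists i, (i < nreac M)%nat /\ (veq n (reac M i) eta \/ veq n (prod M i) eta).

Definition complex_balanced_eq (n : nat) (M : DMAS) (xb : nat -> R) : Prop :=
  (forall j, (j < n)%nat -> 0 < xb j) /\
  forall eta, is_complex n M eta ->
    fsum (nreac M) (fun i => if veqb n (reac M i) eta
                             then rate M i * mpow n xb (reac M i) else 0)
    = fsum (nreac M) (fun i => if veqb n (prod M i) eta
                               then rate M i * mpow n xb (reac M i) else 0).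

Definition DCB (n : nat) (M : DMAS) : Prop :=
  valid_DMAS n M /\ exists xb, complex_balanced_eq n M xb.

Definition cont_on (f : R -> R) (a b : R) : Prop :=
  forall s, a <= s <= b ->
    filterlim f (within (fun u => a <= u <= b) (locally s)) (locally (f s)).
Definition cont_from (f : R -> R) (a : R) : Prop :=
  forall s, a <= s ->
    filterlim f (within (fun u => a <= u) (locally s)) (locally (f s)).

Definition nonneg_state (n : nat) (tau : R) (psi : R -> nat -> R) : Prop :=
  (forall j, (j < n)%nat -> cont_on (fun s => psi s j) (- tau) 0) /\
  (forall s j, - tau <= s <= 0 -> (j < n)%nat -> 0 <= psi s j).
Definition pos_state (n : nat) (tau : R) (psi : R -> nat -> R) : Prop :=
  (forall j, (j < n)%nat -> cont_on (fun s => psi s j) (- tau) 0) /\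
  (forall s j, - tau <= s <= 0 -> (j < n)%nat -> 0 < psi s j).

Definition lin_conj (n : nat) (tau : R) (M Mt : DMAS) (q : nat -> R) : Prop :=
  (forall j, (j < n)%nat -> 0 < q j) /\
  forall psi, pos_state n tau psi ->
    forall j, (j < n)%nat ->
      Frhs n M (fun s k => q k * psi s k) j = q j * Frhs n Mt psi j.

Definition is_solution (n : nat) (tau : R) (M : DMAS) (theta x : R -> nat -> R) : Prop :=
  (forall s j, - tau <= s <= 0 -> (j < n)%nat -> x s j = theta s j) /\
  (forall j, (j < n)%nat -> cont_from (fun t => x t j) (- tau)) /\
  (forall t j, - tau <= t -> (j < n)%nat -> 0 <= x t j) /\
  (forall t j, 0 < t -> (j < n)%nat ->
     is_derive (fun u => x u j) t (Frhs n M (fun s => x (t + s)) j)).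

Definition in_stoich (n : nat) (M : DMAS) (v : nat -> R) : Prop :=
  exists c : nat -> R, forall j, (j < n)%nat ->
    v j = fsum (nreac M) (fun i => c i * (prod M i j - reac M i j)).
Definition in_stoich_perp (n : nat) (M : DMAS) (w : nat -> R) : Prop :=
  forall v, in_stoich n M v -> fsum n (fun j => w j * v j) = 0.

Definition h_fun (n : nat) (Mt : DMAS) (q a : nat -> R) (psi : R -> nat -> R) : R :=
  fsum n (fun j => a j *
    (psi 0 j +
     fsum (nreac Mt) (fun i =>
       (rate Mt i * fprod n (fun k => Rpower (q k) (- reac Mt i k))
        * RInt (fun s => mpow n (psi s) (reac Mt i)) (- delay Mt i) 0)
       * (q j * reac Mt i j)))).

(* psi in H_theta; a in (Q^{-1})^T St^perp means a = Q^{-1} w with w in St^perp *)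
Definition H_set (n : nat) (tau : R) (Mt : DMAS) (q : nat -> R)
    (theta psi : R -> nat -> R) : Prop :=
  nonneg_state n tau psi /\
  forall a : nat -> R,
    (exists w, in_stoich_perp n Mt w /\ forall j, (j < n)%nat -> a j = w j / q j) ->
    h_fun n Mt q a psi = h_fun n Mt q a theta.

From Stdlib Require Import Reals Lra Lia Psatz.
From Coquelicot Require Import Coquelicot.
Open Scope R_scope.

(* Along a solution put [phi := x_t / q]; linear conjugacy gives [F(x_t) = Q Ft(phi)].
   Differentiating [t |-> h_a(x_t)], the integral terms contribute, for each reaction,
   the instantaneous minus the delayed reactant flux, and together with [Ft(phi)] this
   sums to [sum_i kt_i phi(-tau_i)^(y_i) (yt'_i - y_i)], a vector of [St].  Hence for
   [a = Q^-1 w] with [w] orthogonal to [St] the derivative vanishes and the mean value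
   theorem makes [h_a(x_t)] constant.  Conjugacy is only assumed on positive histories;
   it extends to nonnegative ones since [x |-> x^y] is continuous on [0, oo) for [y >= 0]. *)

Lemma fsum_ext m f g : (forall i, (i < m)%nat -> f i = g i) -> fsum m f = fsum m g.
Proof. induction m as [|m IH]; intros E; simpl; [reflexivity|]. rewrite IH, E; auto with arith. Qed.

Lemma fprod_ext m f g : (forall i, (i < m)%nat -> f i = g i) -> fprod m f = fprod m g.
Proof. induction m as [|m IH]; intros E; simpl; [reflexivity|]. rewrite IH, E; auto with arith. Qed.

Lemma fsum_add m f g : fsum m (fun i => f i + g i) = fsum m f + fsum m g.
Proof. induction m as [|m IH]; simpl; [lra|]. rewrite IH; ring. Qed.

Lemma fsum_scal m c f : fsum m (fun i => c * f i) = c * fsum m f.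
Proof. induction m as [|m IH]; simpl; [lra|]. rewrite IH; ring. Qed.

Lemma fprod_mul m f g : fprod m (fun i => f i * g i) = fprod m f * fprod m g.
Proof. induction m as [|m IH]; simpl; [lra|]. rewrite IH; ring. Qed.

Lemma is_lim_seq_fsum m (u : nat -> nat -> R) (l : nat -> R) :
  (forall i, (i < m)%nat -> is_lim_seq (fun k => u k i) (l i)) ->
  is_lim_seq (fun k => fsum m (u k)) (fsum m l).
Proof.
  induction m as [|m IH]; intros H; simpl; [apply is_lim_seq_const|].
  apply is_lim_seq_plus'; [apply IH; auto with arith | auto with arith].
Qed.

Lemma is_lim_seq_fprod m (u : nat -> nat -> R) (l : nat -> R) :
  (forall i, (i < m)%nat -> is_lim_seq (fun k => u k i) (l i)) ->
  is_lim_seq (fun k => fprod m (u k)) (fprod m l).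
Proof.
  induction m as [|m IH]; intros H; simpl; [apply is_lim_seq_const|].
  apply is_lim_seq_mult'; [apply IH; auto with arith | auto with arith].
Qed.

Lemma continuity_pt_fsum m (f : R -> nat -> R) t :
  (forall i, (i < m)%nat -> continuity_pt (fun u => f u i) t) ->
  continuity_pt (fun u => fsum m (f u)) t.
Proof.
  induction m as [|m IH]; intros H; simpl; [now apply continuity_pt_const|].
  apply (continuity_pt_plus (fun u => fsum m (f u))); [apply IH|]; auto with arith.
Qed.

Lemma continuity_pt_fprod m (f : R -> nat -> R) t :
  (forall i, (i < m)%nat -> continuity_pt (fun u => f u i) t) ->
  continuity_pt (fun u => fprod m (f u)) t.
Proof.
  induction m as [|m IH]; intros H; simpl; [now apply continuity_pt_const|].
  apply (continuity_pt_mult (fun u => fprod m (f u))); [apply IH|]; auto with arith.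
Qed.

Lemma is_derive_fsum m (f : nat -> R -> R) (df : nat -> R) t :
  (forall i, (i < m)%nat -> is_derive (f i) t (df i)) ->
  is_derive (fun u => fsum m (fun i => f i u)) t (fsum m df).
Proof.
  induction m as [|m IH]; intros H; simpl; [exact (is_derive_const (V := R_NormedModule) 0 t)|].
  apply (is_derive_plus (fun u => fsum m (fun i => f i u))); [apply IH|]; auto with arith.
Qed.

Lemma rpow_Rpower x y : 0 < x -> rpow x y = Rpower x y.
Proof. intros Hx; unfold rpow; destruct (Req_EM_T x 0); [lra | reflexivity]. Qed.

Lemma rpow_div x c y : 0 <= x -> 0 < c -> rpow (x / c) y = rpow x y * Rpower c (- y).
Proof.
  intros Hx Hc. destruct (Req_dec x 0) as [->|Hx0].
  - rewrite Rdiv_0_l. unfold rpow. destruct (Req_EM_T 0 0) as [_|]; [|lra].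
    destruct (Req_EM_T y 0) as [->|]; [rewrite Ropp_0, Rpower_O|]; lra.
  - assert (Hxc : 0 < x / c) by (apply Rdiv_lt_0_compat; lra).
    rewrite !rpow_Rpower by lra. unfold Rpower, Rdiv.
    rewrite <- exp_plus, ln_mult, ln_Rinv by (try apply Rinv_0_lt_compat; lra).
    f_equal; ring.
Qed.

Lemma rpow_continuous_nonneg y x0 : 0 <= y -> 0 <= x0 -> forall eps, 0 < eps ->
  exists del, 0 < del /\ forall x, 0 <= x -> Rabs (x - x0) < del ->
    Rabs (rpow x y - rpow x0 y) < eps.
Proof.
  intros Hy Hx0 eps Heps. destruct (Rle_lt_or_eq_dec 0 x0 Hx0) as [Hpos|<-].
  - assert (C : continuity_pt (fun x => Rpower x y) x0).
    { apply derivable_continuous_pt. exists (y * Rpower x0 (y - 1)).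
      now apply derivable_pt_lim_power. }
    destruct (C eps Heps) as [d [Hd Hc]].
    exists (Rmin d (x0 / 2)); split; [apply Rmin_glb_lt; lra|].
    intros x _ Hx. pose proof (Rmin_l d (x0 / 2)). pose proof (Rmin_r d (x0 / 2)).
    assert (0 < x) by (apply Rabs_def2 in Hx; lra).
    rewrite !rpow_Rpower by lra.
    destruct (Req_dec x0 x) as [->|Hne]; [rewrite Rminus_diag, Rabs_R0; lra|].
    apply (Hc x). split; [split; [exact I | exact Hne] | simpl; unfold R_dist; lra].
  - destruct (Rle_lt_or_eq_dec 0 y Hy) as [Hypos|<-].
    + (* [x ^ y < eps] as soon as [x < eps ^ (1 / y)] *)
      exists (exp (ln eps / y)); split; [apply exp_pos|].
      intros x Hx Hxd. rewrite Rminus_0_r, Rabs_right in Hxd by lra.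
      unfold rpow. destruct (Req_EM_T 0 0) as [_|]; [|lra].
      destruct (Req_EM_T y 0) as [|_]; [lra|]. rewrite Rminus_0_r.
      destruct (Req_EM_T x 0) as [_|Hx0']; [rewrite Rabs_R0; lra|].
      unfold Rpower. rewrite Rabs_right by (left; apply exp_pos).
      rewrite <- (exp_ln eps) by lra. apply exp_increasing.
      assert (ln x < ln eps / y) by (rewrite <- (ln_exp (ln eps / y)); apply ln_increasing; lra).
      replace (ln eps) with (y * (ln eps / y)) by (field; lra).
      apply Rmult_lt_compat_l; lra.
    + exists 1; split; [lra|]. intros x Hx _.
      assert (E : forall z, 0 <= z -> rpow z 0 = 1).
      { intros z Hz. unfold rpow. destruct (Req_EM_T z 0); destruct (Req_EM_T 0 0); try lra.
        apply Rpower_O; lra. }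
      rewrite !E by lra. rewrite Rminus_diag, Rabs_R0; lra.
Qed.

Lemma is_lim_seq_rpow u l y : 0 <= y -> (forall m, 0 <= u m) -> 0 <= l ->
  is_lim_seq u l -> is_lim_seq (fun m => rpow (u m) y) (rpow l y).
Proof.
  intros Hy Hu Hl H. apply is_lim_seq_spec in H. apply is_lim_seq_spec. intros eps.
  destruct (rpow_continuous_nonneg y l Hy Hl eps (cond_pos eps)) as [d [Hd Hr]].
  destruct (H (mkposreal d Hd)) as [N HN]. exists N. intros m Hm. apply Hr; auto.
Qed.

Lemma continuity_pt_rpow_comp f y t : 0 <= y -> (forall u, 0 <= f u) ->
  continuity_pt f t -> continuity_pt (fun u => rpow (f u) y) t.
Proof.
  intros Hy Hf Hc eps Heps.
  destruct (rpow_continuous_nonneg y (f t) Hy (Hf t) eps Heps) as [d [Hd Hr]].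
  destruct (Hc d Hd) as [a [Ha Hca]]. exists a. split; [exact Ha|].
  intros u Hu. apply Hr; [apply Hf | apply (Hca u Hu)].
Qed.

Lemma mpow_ext n u v y : (forall k, (k < n)%nat -> u k = v k) -> mpow n u y = mpow n v y.
Proof. intros E. apply fprod_ext. intros k Hk. now rewrite E. Qed.

Lemma mpow_div n x c y : (forall k, (k < n)%nat -> 0 <= x k /\ 0 < c k) ->
  mpow n (fun k => x k / c k) y = mpow n x y * fprod n (fun k => Rpower (c k) (- y k)).
Proof.
  intros H. unfold mpow. rewrite <- fprod_mul. apply fprod_ext. intros k Hk.
  destruct (H k Hk). now apply rpow_div.
Qed.

Lemma is_lim_seq_mpow n (u : nat -> nat -> R) (l y : nat -> R) :
  (forall k, (k < n)%nat -> is_lim_seq (fun m => u m k) (l k)) ->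
  (forall m k, (k < n)%nat -> 0 <= u m k) -> (forall k, (k < n)%nat -> 0 <= l k) ->
  (forall k, (k < n)%nat -> 0 <= y k) ->
  is_lim_seq (fun m => mpow n (u m) y) (mpow n l y).
Proof.
  intros Hlim Hu Hl Hy. apply (is_lim_seq_fprod n (fun m k => rpow (u m k) (y k))).
  intros k Hk. apply is_lim_seq_rpow; auto.
Qed.

Lemma Frhs_ext n M psi psi' j : (forall s k, (k < n)%nat -> psi s k = psi' s k) ->
  Frhs n M psi j = Frhs n M psi' j.
Proof.
  intros E. apply fsum_ext. intros i _.
  rewrite (mpow_ext n (psi (- delay M i)) (psi' (- delay M i))),
    (mpow_ext n (psi 0) (psi' 0)) by auto.
  reflexivity.
Qed.

Lemma is_lim_seq_Frhs n M tau (psi : nat -> R -> nat -> R) (psi0 : R -> nat -> R) j :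
  valid_DMAS n M -> delay_bound M tau -> 0 <= tau ->
  (forall m s k, - tau <= s <= 0 -> (k < n)%nat -> 0 <= psi m s k) ->
  (forall s k, - tau <= s <= 0 -> (k < n)%nat -> 0 <= psi0 s k) ->
  (forall s k, - tau <= s <= 0 -> (k < n)%nat -> is_lim_seq (fun m => psi m s k) (psi0 s k)) ->
  is_lim_seq (fun m => Frhs n M (psi m) j) (Frhs n M psi0 j).
Proof.
  intros HM Hdel Htau Hpsi Hpsi0 Hlim.
  apply (is_lim_seq_fsum _ (fun m i => rate M i *
    (mpow n (psi m (- delay M i)) (reac M i) * prod M i j
     - mpow n (psi m 0) (reac M i) * reac M i j))).
  intros i Hi. destruct (HM i Hi) as [_ [Hd Hy]]. specialize (Hdel i Hi).
  assert (Hs : - tau <= - delay M i <= 0) by lra. assert (H0 : - tau <= 0 <= 0) by lra.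
  apply is_lim_seq_mult'; [apply is_lim_seq_const|].
  apply is_lim_seq_minus'; apply is_lim_seq_mult'; try apply is_lim_seq_const;
    apply is_lim_seq_mpow; auto; intros k Hk; apply (Hy k Hk).
Qed.

Lemma is_lim_seq_inv_succ : is_lim_seq (fun m => / INR (S m)) 0.
Proof.
  apply (is_lim_seq_incr_1 (fun m => / INR m)).
  replace (Finite 0) with (Rbar_inv p_infty) by reflexivity.
  apply is_lim_seq_inv; [apply is_lim_seq_INR | discriminate].
Qed.

Lemma cont_on_comp f g a b : (forall z, continuity_pt g z) ->
  cont_on f a b -> cont_on (fun s => g (f s)) a b.
Proof.
  intros Hg Hf s Hs. apply (filterlim_comp _ _ _ f g _ _ _ (Hf s Hs)).
  now apply continuity_pt_filterlim.
Qed.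

Lemma lin_conj_nonneg n tau M Mt q psi j :
  valid_DMAS n M -> valid_DMAS n Mt ->
  delay_bound M tau -> delay_bound Mt tau -> 0 <= tau -> lin_conj n tau M Mt q ->
  nonneg_state n tau psi -> (j < n)%nat ->
  Frhs n M (fun s k => q k * psi s k) j = q j * Frhs n Mt psi j.
Proof.
  intros HM HMt Hdel Hdelt Htau [Hq Hconj] [Hcont Hpsi] Hj.
  set (psim m s k := psi s k + / INR (S m)).
  assert (Heps : forall m, 0 < / INR (S m))
    by (intros m; apply Rinv_0_lt_compat, lt_0_INR; lia).
  assert (Hlim : forall c s k,
    is_lim_seq (fun m => c * psim m s k) (c * psi s k)).
  { intros c s k. replace (c * psi s k) with (c * (psi s k + 0)) by ring.
    apply is_lim_seq_mult'; [apply is_lim_seq_const|].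
    apply is_lim_seq_plus'; [apply is_lim_seq_const | apply is_lim_seq_inv_succ]. }
  assert (Hpos : forall m, pos_state n tau (psim m)).
  { intros m; split.
    - intros k Hk. apply (cont_on_comp (fun s => psi s k) (fun z => z + / INR (S m))); auto.
      intros z. reg.
    - intros s k Hs Hk. specialize (Hpsi s k Hs Hk). specialize (Heps m). unfold psim. lra. }
  assert (LM : is_lim_seq (fun m => Frhs n M (fun s k => q k * psim m s k) j)
                 (Frhs n M (fun s k => q k * psi s k) j)).
  { apply (is_lim_seq_Frhs n M tau); auto.
    - intros m s k Hs Hk. specialize (Hpsi s k Hs Hk). specialize (Heps m).
      specialize (Hq k Hk). unfold psim. nra.
    - intros s k Hs Hk. specialize (Hpsi s k Hs Hk). specialize (Hq k Hk). nra. }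
  assert (LMt : is_lim_seq (fun m => q j * Frhs n Mt (psim m) j) (q j * Frhs n Mt psi j)).
  { apply is_lim_seq_mult'; [apply is_lim_seq_const|].
    apply (is_lim_seq_Frhs n Mt tau); auto.
    - intros m s k Hs Hk. specialize (Hpsi s k Hs Hk). specialize (Heps m). unfold psim. lra.
    - intros s k _ _. apply (is_lim_seq_ext (fun m => 1 * psim m s k)); [intros; ring|].
      rewrite <- (Rmult_1_l (psi s k)). apply Hlim. }
  apply is_lim_seq_unique in LM, LMt.
  rewrite (Lim_seq_ext _ _ (fun m => Hconj (psim m) (Hpos m) j Hj)) in LM.
  rewrite LM in LMt. now injection LMt.
Qed.

Lemma continuity_pt_Rmax_l c t : continuity_pt (fun u => Rmax u c) t.
Proof.
  intros eps Heps. exists eps. split; [exact Heps|]. intros u [_ Hu].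
  simpl in *. unfold R_dist in *. apply Rabs_def2 in Hu.
  apply Rabs_def1; unfold Rmax; destruct (Rle_dec u c), (Rle_dec t c); lra.
Qed.

Lemma continuity_pt_cont_from_Rmax f a t :
  cont_from f a -> continuity_pt (fun u => f (Rmax u a)) t.
Proof.
  intros Hf. apply continuity_pt_filterlim.
  apply (filterlim_comp _ _ _ (fun u => Rmax u a) f _ (within (fun v => a <= v) (locally (Rmax t a)))).
  - intros P HP. apply (proj1 (continuity_pt_filterlim _ _) (continuity_pt_Rmax_l a t)) in HP.
    apply (filter_imp _ _ (fun u Hu => Hu (Rmax_r u a)) HP).
  - apply Hf, Rmax_r.
Qed.

Lemma cont_on_shift f tau t : cont_from f (- tau) -> 0 <= t ->
  cont_on (fun s => f (t + s)) (- tau) 0.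
Proof.
  intros Hf Ht s Hs.
  assert (C : continuity_pt (fun s => f (Rmax (t + s) (- tau))) s).
  { apply (continuity_pt_comp (fun s => t + s) (fun u => f (Rmax u (- tau)))); [reg|].
    now apply continuity_pt_cont_from_Rmax. }
  apply continuity_pt_filterlim in C. rewrite Rmax_left in C by lra.
  intros P HP. destruct (C P HP) as [e He]. exists e. intros u Hu Hsu.
  specialize (He u Hu). simpl in He. now rewrite Rmax_left in He by lra.
Qed.

Lemma RInt_shift (G : R -> R) a b t : (forall u, continuity_pt G u) ->
  RInt (fun s => G (t + s)) a b = RInt G (t + a) (t + b).
Proof.
  intros HG.
  assert (HE : ex_RInt G (1 * a + t) (1 * b + t)).
  { apply (@ex_RInt_continuous R_CompleteNormedModule).
    intros; now apply continuity_pt_filterlim. }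
  rewrite <- (Rmult_1_l a), <- (Rmult_1_l b) at 2.
  rewrite (Rplus_comm t (1 * a)), (Rplus_comm t (1 * b)).
  rewrite <- (RInt_comp_lin G 1 t a b HE).
  apply RInt_ext. intros s _. unfold scal; simpl; unfold mult; simpl. rewrite Rmult_1_l. f_equal. ring.
Qed.

Lemma is_derive_RInt_window (G : R -> R) d t : (forall u, continuity_pt G u) ->
  is_derive (fun u => RInt G (u - d) u) t (G t - G (t - d)).
Proof.
  intros HG.
  assert (HC : forall u, continuous G u) by (intros; now apply continuity_pt_filterlim).
  replace (G t - G (t - d)) with (minus (scal 1 (G t)) (scal 1 (G (t - d))))
    by (unfold minus, plus, opp, scal; simpl; unfold mult; simpl; ring).
  apply (is_derive_RInt_bound_comp G (RInt G) (fun u => u - d) (fun u => u)); auto.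
  - apply filter_forall. intros uv. apply (@RInt_correct R_CompleteNormedModule).
    apply (@ex_RInt_continuous R_CompleteNormedModule). auto.
  - auto_derive; [exact I | ring].
  - auto_derive; [exact I | ring].
Qed.

Lemma continuity_pt_RInt_window (G : R -> R) d t : (forall u, continuity_pt G u) ->
  continuity_pt (fun u => RInt G (u - d) u) t.
Proof.
  intros HG. apply continuity_pt_filterlim.
  apply (ex_derive_continuous (V := R_NormedModule) (fun u => RInt G (u - d) u)).
  eexists. now apply is_derive_RInt_window.
Qed.

Section Trajectory.

Variables (n : nat) (Mt : DMAS) (tau : R) (q : nat -> R) (x : R -> nat -> R).
Hypothesis Htau : 0 <= tau.
Hypothesis HMt : valid_DMAS n Mt.
Hypothesis Hdelay : delay_bound Mt tau.
Hypothesis x_cont : forall k, (k < n)%nat -> cont_from (fun t => x t k) (- tau).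
Hypothesis x_nonneg : forall t k, - tau <= t -> (k < n)%nat -> 0 <= x t k.

(* [x] is extended to the left of [- tau] by its value at [- tau], so that the
   integrands below are continuous on all of [R]. *)
Definition reac_power i u := mpow n (x (Rmax u (- tau))) (reac Mt i).

Definition scaled_rate i := rate Mt i * fprod n (fun k => Rpower (q k) (- reac Mt i k)).

Definition h_path (a : nat -> R) t :=
  fsum n (fun j => a j * (x (Rmax t (- tau)) j +
    fsum (nreac Mt) (fun i =>
      (scaled_rate i * RInt (reac_power i) (t - delay Mt i) t) * (q j * reac Mt i j)))).

Lemma continuity_pt_reac_power i t : (i < nreac Mt)%nat -> continuity_pt (reac_power i) t.
Proof.
  intros Hi. apply (continuity_pt_fprod n (fun u k => rpow (x (Rmax u (- tau)) k) (reac Mt i k))).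
  intros k Hk. apply (continuity_pt_rpow_comp (fun u => x (Rmax u (- tau)) k)).
  - apply (HMt i Hi), Hk.
  - intros u. apply x_nonneg; [apply Rmax_r | exact Hk].
  - apply (continuity_pt_cont_from_Rmax (fun u => x u k)), x_cont, Hk.
Qed.

Lemma h_fun_shift_eq a t : 0 <= t ->
  h_fun n Mt q a (fun s => x (t + s)) = h_path a t.
Proof.
  intros Ht. apply fsum_ext. intros j Hj.
  rewrite Rplus_0_r, Rmax_left by lra. do 2 f_equal.
  apply fsum_ext. intros i Hi. do 2 f_equal.
  destruct (HMt i Hi) as [_ [Hd _]]. pose proof (Hdelay i Hi).
  transitivity (RInt (fun s => reac_power i (t + s)) (- delay Mt i) 0).
  - apply RInt_ext. intros s Hs.
    rewrite Rmin_left in Hs by lra. rewrite Rmax_right in Hs by lra.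
    unfold reac_power. now rewrite Rmax_left by lra.
  - rewrite RInt_shift by (intros; now apply continuity_pt_reac_power).
    f_equal; ring.
Qed.

Lemma continuity_pt_h_path a t : continuity_pt (h_path a) t.
Proof.
  apply continuity_pt_fsum. intros j Hj.
  apply continuity_pt_mult; [now apply continuity_pt_const|].
  apply continuity_pt_plus.
  - apply (continuity_pt_cont_from_Rmax (fun u => x u j)), x_cont, Hj.
  - apply continuity_pt_fsum. intros i Hi.
    apply (continuity_pt_mult
      (fun u => scaled_rate i * RInt (reac_power i) (u - delay Mt i) u)); [|now apply continuity_pt_const].
    apply (continuity_pt_mult (fun _ => scaled_rate i)); [now apply continuity_pt_const|].
    apply continuity_pt_RInt_window. intros; now apply continuity_pt_reac_power.
Qed.

Lemma is_derive_h_path a t (dx : nat -> R) : 0 < t ->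
  (forall j, (j < n)%nat -> is_derive (fun u => x u j) t (dx j)) ->
  is_derive (h_path a) t
    (fsum n (fun j => a j * (dx j +
       fsum (nreac Mt) (fun i =>
         (scaled_rate i * (reac_power i t - reac_power i (t - delay Mt i))) * (q j * reac Mt i j))))).
Proof.
  intros Ht Hdx. apply (is_derive_fsum n (fun j u => a j * (x (Rmax u (- tau)) j + _))).
  intros j Hj. apply is_derive_scal, (is_derive_plus (fun u => x (Rmax u (- tau)) j)).
  - apply (is_derive_ext_loc (fun u => x u j)); [|apply Hdx, Hj].
    exists (mkposreal t Ht). intros u Hu. rewrite Rmax_left; [reflexivity|].
    unfold ball in Hu; simpl in Hu; unfold AbsRing_ball, abs, minus, plus, opp in Hu; simpl in Hu.
    apply Rabs_def2 in Hu. lra.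
  - apply (is_derive_fsum _ (fun i u => (scaled_rate i * RInt (reac_power i) (u - delay Mt i) u)
                                         * (q j * reac Mt i j))).
    intros i Hi.
    apply (is_derive_scal_l (V := R_NormedModule) (fun u => scaled_rate i * RInt (reac_power i) (u - delay Mt i) u)).
    apply is_derive_scal.
    apply is_derive_RInt_window. intros; now apply continuity_pt_reac_power.
Qed.

End Trajectory.

Lemma in_stoich_Frhs_add_delay_flux n Mt phi :
  in_stoich n Mt (fun j => Frhs n Mt phi j +
    fsum (nreac Mt) (fun i => rate Mt i *
      (mpow n (phi 0) (reac Mt i) - mpow n (phi (- delay Mt i)) (reac Mt i)) * reac Mt i j)).
Proof.
  exists (fun i => rate Mt i * mpow n (phi (- delay Mt i)) (reac Mt i)). intros j _.
  unfold Frhs. rewrite <- fsum_add. apply fsum_ext. intros i _. ring.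
Qed.

Lemma h_path_derivative_eq0 n M Mt tau q x w a t :
  valid_DMAS n M -> valid_DMAS n Mt -> delay_bound M tau -> delay_bound Mt tau -> 0 <= tau ->
  lin_conj n tau M Mt q ->
  (forall k, (k < n)%nat -> cont_from (fun u => x u k) (- tau)) ->
  (forall u k, - tau <= u -> (k < n)%nat -> 0 <= x u k) ->
  in_stoich_perp n Mt w -> (forall j, (j < n)%nat -> a j = w j / q j) -> 0 <= t ->
  fsum n (fun j => a j * (Frhs n M (fun s => x (t + s)) j +
    fsum (nreac Mt) (fun i => (scaled_rate n Mt q i *
      (reac_power n Mt tau x i t - reac_power n Mt tau x i (t - delay Mt i))) * (q j * reac Mt i j))))
  = 0.
Proof.
  intros HM HMt Hdel Hdelt Htau Hconj Hcont Hx Hw Ha Ht.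
  pose proof (proj1 Hconj) as Hq.
  set (phi s k := x (t + s) k / q k).
  assert (Hphi : nonneg_state n tau phi).
  { split.
    - intros k Hk. apply (cont_on_comp (fun s => x (t + s) k) (fun z => z / q k)).
      + intros z. reg.
      + apply (cont_on_shift (fun u => x u k)); auto.
    - intros s k Hs Hk. apply Rdiv_le_0_compat; [apply Hx; [lra | exact Hk] | now apply Hq]. }
  assert (Hpow : forall i s, (i < nreac Mt)%nat -> 0 <= s <= tau ->
    scaled_rate n Mt q i * reac_power n Mt tau x i (t - s) = rate Mt i * mpow n (phi (- s)) (reac Mt i)).
  { intros i s Hi Hs. unfold scaled_rate, reac_power, phi.
    rewrite mpow_div by (intros k Hk; split; [apply Hx; [lra | exact Hk] | now apply Hq]).
    rewrite Rmax_left by lra. unfold Rminus. ring. }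
  rewrite <- (Hw _ (in_stoich_Frhs_add_delay_flux n Mt phi)).
  apply fsum_ext. intros j Hj.
  rewrite Ha by exact Hj.
  rewrite (Frhs_ext n M _ (fun s k => q k * phi s k))
    by (intros s k Hk; unfold phi; specialize (Hq k Hk); field; lra).
  rewrite (lin_conj_nonneg n tau M Mt) by assumption.
  replace (fsum (nreac Mt) _) with (q j * fsum (nreac Mt) (fun i => rate Mt i *
      (mpow n (phi 0) (reac Mt i) - mpow n (phi (- delay Mt i)) (reac Mt i)) * reac Mt i j)).
  - specialize (Hq j Hj). field. lra.
  - rewrite <- fsum_scal. apply fsum_ext. intros i Hi.
    destruct (HMt i Hi) as [_ [Hd _]]. pose proof (Hdelt i Hi).
    replace (phi 0) with (phi (- 0)) by now rewrite Ropp_0.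
    rewrite Rmult_minus_distr_l, <- !Hpow, Rminus_0_r by (auto; lra). ring.
Qed.

Lemma h_path_conserved n M Mt tau q theta x w a t :
  valid_DMAS n M -> valid_DMAS n Mt -> delay_bound M tau -> delay_bound Mt tau -> 0 <= tau ->
  lin_conj n tau M Mt q -> is_solution n tau M theta x ->
  in_stoich_perp n Mt w -> (forall j, (j < n)%nat -> a j = w j / q j) -> 0 <= t ->
  h_path n Mt tau q x a t = h_path n Mt tau q x a 0.
Proof.
  intros HM HMt Hdel Hdelt Htau Hconj [_ [Hcont [Hx Hder]]] Hw Ha Ht.
  destruct (Rle_lt_or_eq_dec 0 t Ht) as [Htpos|<-]; [|reflexivity].
  destruct (MVT_gen (h_path n Mt tau q x a) 0 t (fun _ => 0)) as [c [_ Hc]].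
  - intros u Hu. rewrite Rmin_left, Rmax_right in Hu by lra.
    rewrite <- (h_path_derivative_eq0 n M Mt tau q x w a u) by (auto; lra).
    apply is_derive_h_path; auto; [lra|]. intros j Hj. apply Hder; [lra | exact Hj].
  - intros u _. now apply continuity_pt_h_path.
  - lra.
Qed.

Lemma h_fun_ext n Mt tau q a psi psi' :
  valid_DMAS n Mt -> delay_bound Mt tau -> 0 <= tau ->
  (forall s k, - tau <= s <= 0 -> (k < n)%nat -> psi s k = psi' s k) ->
  h_fun n Mt q a psi = h_fun n Mt q a psi'.
Proof.
  intros HMt Hdel Htau E. apply fsum_ext. intros j Hj.
  rewrite E by (auto; lra). do 2 f_equal.
  apply fsum_ext. intros i Hi. do 2 f_equal.
  destruct (HMt i Hi) as [_ [Hd _]]. pose proof (Hdel i Hi).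
  apply RInt_ext. intros s Hs. rewrite Rmin_left, Rmax_right in Hs by lra.
  apply mpow_ext. intros k Hk. apply E; [lra | exact Hk].
Qed.

Theorem mainTheorem3 (n : nat) (M Mt : DMAS) (tau : R) (q : nat -> R)
    (theta x : R -> nat -> R) :
  valid_DMAS n M -> DCB n Mt -> 0 <= tau ->
  delay_bound M tau -> delay_bound Mt tau ->
  lin_conj n tau M Mt q ->
  nonneg_state n tau theta ->
  is_solution n tau M theta x ->
  forall t, 0 <= t -> H_set n tau Mt q theta (fun s => x (t + s)).
Proof.
  intros HM [HMt _] Htau Hdel Hdelt Hconj _ Hsol t Ht.
  pose proof Hsol as [Hinit [Hcont [Hx _]]].
  split; [split|].
  - intros k Hk. apply (cont_on_shift (fun u => x u k)); auto.
  - intros s k Hs Hk. apply Hx; [lra | exact Hk].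
  - intros a [w [Hw Ha]].
    rewrite (h_fun_ext n Mt tau q a theta (fun s => x (0 + s))) by
      (auto; intros s k Hs Hk; rewrite Rplus_0_l; symmetry; now apply Hinit).
    rewrite !(h_fun_shift_eq n Mt tau) by (auto; lra).
    now apply (h_path_conserved n M Mt tau q theta x w).
Qed.
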